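(* Assume (A1), (A2), (A3) (see context). If $\mathbb P$ has finite range of dependence or has negative association, then there is a constant $c>0$ such that $\mathbb P(\xi(\Lambda_\ell)=0)\le e^{-c\ell^d}$ for all $\ell\ge1$. In particular $\mathbb P$ satisfies Condition $C(\alpha)$ for every $\alpha>0$.
   Context: $\Lambda_\ell=[-\ell,\ell]^d$. $\mathcal N$ = locally finite subsets of $\mathbb R^d$, identified with counting measures ($\xi(A)=\#(\xi\cap A)$), with $\sigma$-algebra generated by $\xi\mapsto\xi(A)$; $\tau_x\xi:=\xi-x$. $\mathrm{DT}(\xi)$: graph on $\xi$ with edges $\{x,y\}$ whose Voronoi cells $\mathrm{Vor}(\cdot|\xi)=\{y:|y-\cdot|\le|y-z|\,\forall z\in\xi\}$ share a $(d-1)$-dimensional face. Setting: $(\Omega,\mathcal F,\mathcal P)$ probability space with measurable $\mathbb R^d$-action $(\theta_x)$; simple point process $\omega\mapsto\hat\omega\in\mathcal N$ with law $\mathbb P$; measurable symmetric conductances $c_{x,y}(\omega)\ge0$ vanishing off the edges of $\mathrm{DT}(\hat\omega)$. (A1) $\mathcal P$ is $\theta$-invariant and $\mathcal P(\hat\omega=\emptyset)=0$; (A2) $m:=\mathbb E[\xi([0,1]^d)]\in(0,\infty)$; (A3) on a $\theta$-invariant measurable full-measure set, $\widehat{\theta_x\omega}=\tau_x\hat\omega$ and $c_{y-x,z-x}(\theta_x\omega)=c_{y,z}(\omega)$ for all $x$ and edges $\{y,z\}$. Finite range of dependence: $\exists L>0$ such that $\xi\cap A$, $\xi\cap B$ are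 independent under $\mathbb P$ for Borel $A,B$ at Euclidean distance $\ge L$. Negative association: for all $n,k$, weakly increasing $f:\mathbb R_+^n\to\mathbb R$, $g:\mathbb R_+^k\to\mathbb R$, pairwise disjoint bounded Borel $A_1,\dots,A_n,B_1,\dots,B_k$: $\mathrm{Cov}_{\mathbb P}(f(\xi(A_1),\dots,\xi(A_n)),g(\xi(B_1),\dots,\xi(B_k)))\le0$ whenever both have finite second moments. Condition $C(\alpha)$: $\exists\kappa>0$ with $\mathbb P(\xi(\Lambda_\ell)=0)\le\kappa\ell^{-\alpha}$ for all $\ell\ge1$. *)

From HB Require Import structures.
From mathcomp Require Import all_boot all_order all_algebra.
From mathcomp Require Import all_classical all_reals all_analysis measurable_realfun.
Set Implicit Arguments. Unset Strict Implicit. Unset Printing Implicit Defensive.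
Import Order.TTheory GRing.Theory Num.Theory.
Import numFieldNormedType.Exports.
Local Open Scope classical_set_scope.
Local Open Scope ring_scope.

(* Euclidean norm on R^d (the library norm on matrices is the sup norm). *)
Definition enorm (R : realType) (d : nat) (x : 'rV[R]_d) : R :=
  Num.sqrt (\sum_(i < d) x ord0 i ^+ 2).

Definition borel (R : realType) (d : nat) : set (set 'rV[R]_d) :=
  <<s [set A : set 'rV[R]_d | @open 'rV[R]_d A] >>.

Definition bounded_set (R : realType) (d : nat) (A : set 'rV[R]_d) : Prop :=
  exists r : R, A `<=` [set x | enorm x <= r].

Definition cube (R : realType) (d : nat) (l : R) : set 'rV[R]_d :=
  [set x | forall i : 'I_d, - l <= x ord0 i <= l].

Definition unit_cube (R : realType) (d : nat) : set 'rV[R]_d :=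
  [set x | forall i : 'I_d, 0 <= x ord0 i <= 1].

Definition locally_finite (R : realType) (d : nat) (xi : set 'rV[R]_d) : Prop :=
  forall r : R, finite_set (xi `&` [set x | enorm x <= r]).

Definition npts (R : realType) (d : nat) (xi A : set 'rV[R]_d) : \bar R :=
  \esum_(x in xi `&` A) 1%E.

Definition shift (R : realType) (d : nat) (xi : set 'rV[R]_d) (x : 'rV[R]_d)
  : set 'rV[R]_d := [set y - x | y in xi].

Definition voronoi (R : realType) (d : nat) (xi : set 'rV[R]_d) (x : 'rV[R]_d)
  : set 'rV[R]_d :=
  [set y | forall z, xi z -> enorm (y - x) <= enorm (y - z)].

(* {x,y} is an edge of DT(xi): the Voronoi cells of x and y share a
   (d-1)-dimensional face, i.e. their intersection (which lies in the bisector
   hyperplane) contains a relatively open ball of that hyperplane. *)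
Definition dt_edge (R : realType) (d : nat) (xi : set 'rV[R]_d) (x y : 'rV[R]_d)
  : Prop :=
  [/\ xi x, xi y, x <> y &
   exists (p : 'rV[R]_d) (r : R), 0 < r /\
     forall q, enorm (q - p) < r -> enorm (q - x) = enorm (q - y) ->
       voronoi xi x q /\ voronoi xi y q].

Definition dist_ge (R : realType) (d : nat) (A B : set 'rV[R]_d) (L : R) : Prop :=
  forall a b, A a -> B b -> L <= enorm (a - b).

Definition measurable_action (R : realType) (d : nat) (dO : measure_display)
  (Omega : measurableType dO) (theta : 'rV[R]_d -> Omega -> Omega) : Prop :=
  [/\ forall w, theta 0 w = w,
      forall x y w, theta (x + y) w = theta x (theta y w) &
      forall E : set Omega, measurable E ->
        <<s [set C | exists A B, [/\ borel A, measurable B & C = A `*` B]] >>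
          [set p : 'rV[R]_d * Omega | E (theta p.1 p.2)] ].

Definition point_process (R : realType) (d : nat) (dO : measure_display)
  (Omega : measurableType dO) (hat : Omega -> set 'rV[R]_d) : Prop :=
  (forall w, locally_finite (hat w)) /\
  (forall A, borel A -> measurable_fun [set: Omega] (fun w => (npts (hat w) A : \bar R))).

Definition conductances (R : realType) (d : nat) (dO : measure_display)
  (Omega : measurableType dO) (hat : Omega -> set 'rV[R]_d)
  (c : Omega -> 'rV[R]_d -> 'rV[R]_d -> R) : Prop :=
  [/\ forall x y, measurable_fun setT (fun w => c w x y),
      forall w x y, c w x y = c w y x,
      forall w x y, 0 <= c w x y &
      forall w x y, ~ dt_edge (hat w) x y -> c w x y = 0].

Definition A1 (R : realType) (d : nat) (dO : measure_display)
  (Omega : measurableType dO) (P : probability Omega R)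
  (theta : 'rV[R]_d -> Omega -> Omega) (hat : Omega -> set 'rV[R]_d) : Prop :=
  (forall x (E : set Omega), measurable E -> P (theta x @^-1` E) = P E) /\
  P [set w | hat w = set0] = 0%E.

Definition A2 (R : realType) (d : nat) (dO : measure_display)
  (Omega : measurableType dO) (P : probability Omega R)
  (hat : Omega -> set 'rV[R]_d) : Prop :=
  (0 < \int[P]_w npts (hat w) (@unit_cube R d) < +oo)%E.

Definition A3 (R : realType) (d : nat) (dO : measure_display)
  (Omega : measurableType dO) (P : probability Omega R)
  (theta : 'rV[R]_d -> Omega -> Omega) (hat : Omega -> set 'rV[R]_d)
  (c : Omega -> 'rV[R]_d -> 'rV[R]_d -> R) : Prop :=
  exists Omega0 : set Omega,
    [/\ measurable Omega0, P Omega0 = 1%E,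
        forall x, theta x @^-1` Omega0 = Omega0 &
        forall w, Omega0 w -> forall x,
          hat (theta x w) = shift (hat w) x /\
          forall y z, dt_edge (hat w) y z ->
            c (theta x w) (y - x) (z - x) = c w y z].

(* sigma-algebra on Omega generated by xi \cap A, i.e. by the counts xi(A'),
   A' Borel subset of A *)
Definition restr_sigma (R : realType) (d : nat) (dO : measure_display)
  (Omega : measurableType dO) (hat : Omega -> set 'rV[R]_d) (A : set 'rV[R]_d)
  : set (set Omega) :=
  <<s [set E | exists (A' : set 'rV[R]_d) (k : \bar R),
                 [/\ borel A', A' `<=` A & E = [set w | npts (hat w) A' = k]]] >>.

Definition finite_range (R : realType) (d : nat) (dO : measure_display)
  (Omega : measurableType dO) (P : probability Omega R)
  (hat : Omega -> set 'rV[R]_d) : Prop :=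
  exists L : R, 0 < L /\
    forall A B : set 'rV[R]_d, borel A -> borel B -> dist_ge A B L ->
      forall E F, restr_sigma hat A E -> restr_sigma hat B F ->
        P (E `&` F) = (P E * P F)%E.

Definition incr_on_nonneg (R : realType) (n : nat) (f : 'rV[R]_n -> R) : Prop :=
  forall u v : 'rV[R]_n, (forall i, 0 <= u ord0 i <= v ord0 i) -> f u <= f v.

Definition neg_assoc (R : realType) (d : nat) (dO : measure_display)
  (Omega : measurableType dO) (P : probability Omega R)
  (hat : Omega -> set 'rV[R]_d) : Prop :=
  forall (n k : nat) (f : 'rV[R]_n -> R) (g : 'rV[R]_k -> R)
         (As : 'I_n -> set 'rV[R]_d) (Bs : 'I_k -> set 'rV[R]_d),
    incr_on_nonneg f -> incr_on_nonneg g ->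
    (forall i, borel (As i) /\ bounded_set (As i)) ->
    (forall j, borel (Bs j) /\ bounded_set (Bs j)) ->
    (forall i i', i <> i' -> As i `&` As i' = set0) ->
    (forall j j', j <> j' -> Bs j `&` Bs j' = set0) ->
    (forall i j, As i `&` Bs j = set0) ->
    let X := fun w => f (\row_(i < n) fine (npts (hat w) (As i))) in
    let Y := fun w => g (\row_(j < k) fine (npts (hat w) (Bs j))) in
    X \in Lfun P 2%:E -> Y \in Lfun P 2%:E ->
    (covariance P X Y <= 0)%E.

(* The probability p that the unit cube is empty is < 1 because the intensity
   is positive, and by stationarity every translate of the unit cube has the
   same vacancy probability. Inside [-l, l]^d one fits about (l / (D + 1))^d
   unit cells at mutual distance at least D. With a finite range of dependence
   L (take D = L) their vacancy events are independent; under negative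
   association (D = 1, the cells being disjoint) the vacancy indicators,
   decreasing functions of the counts, are negatively correlated. Either way
   P(xi(Lambda_l) = 0) <= p^((l / (D + 1))^d) = exp(-c l^d), which beats any
   power of l. *)
From Pilot Require Import Defs.
From HB Require Import structures.
From mathcomp Require Import all_boot all_order all_algebra.
From mathcomp Require Import all_classical all_reals all_analysis measurable_realfun.
From mathcomp Require Import ring lra.
Import Order.TTheory GRing.Theory Num.Theory.
Import numFieldNormedType.Exports.
Local Open Scope classical_set_scope.
Local Open Scope ring_scope.
Set Implicit Arguments. Unset Strict Implicit. Unset Printing Implicit Defensive.

Section Geometry.
Variables (R : realType) (d : nat).
Implicit Types (A B xi : set 'rV[R]_d) (a v x : 'rV[R]_d).

Definition box a (s : R) : set 'rV[R]_d :=
  [set x | forall i, a ord0 i <= x ord0 i <= a ord0 i + s].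

Lemma enorm0 : enorm (0 : 'rV[R]_d) = 0.
Proof. by rewrite /enorm big1 ?sqrtr0 // => i _; rewrite mxE expr0n. Qed.

Lemma normr_coord_le_enorm x i : `|x ord0 i| <= enorm x.
Proof.
rewrite /enorm -sqrtr_sqr ler_wsqrtr // (bigD1 i) //= lerDl.
by apply: sumr_ge0 => j _; rewrite sqr_ge0.
Qed.

Lemma dist_ge_disjoint A B (L : R) : 0 < L -> dist_ge A B L -> A `&` B = set0.
Proof.
move=> L0 hAB; apply/seteqP; split=> // x [xA xB].
by have := hAB x x xA xB; rewrite subrr enorm0 leNgt L0.
Qed.

Lemma npts_eq0 xi A : npts xi A = 0%E <-> xi `&` A = set0.
Proof.
split=> [npts0|xiA0]; last by rewrite /npts xiA0 esum_set0.
apply/seteqP; split=> // x xA; suff : (1 <= npts xi A)%E by rewrite npts0 lee_fin ler10.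
apply: esum_ge; exists [set x]; last by rewrite fsbig_set1.
by split; [exact: finite_set1 | move=> y ->].
Qed.

Lemma npts_fin_num xi A : finite_set (xi `&` A) -> npts xi A \is a fin_num.
Proof. by move=> fA; rewrite /npts esum_fset // fsbig_finite //= sumEFin. Qed.

Lemma borel_closed A : closed A -> borel A.
Proof.
move=> cA; rewrite -[A]setCK; apply: sigma_algebraC.
by apply: sub_sigma_algebra; rewrite /= openC.
Qed.

Lemma borelU A B : borel A -> borel B -> borel (A `|` B).
Proof. exact: (@measurableU _ (g_sigma_algebraType [set A : set 'rV[R]_d | open A])). Qed.

Lemma closed_box a s : closed (box a s).
Proof.
have -> : box a s = \bigcap_(i in setT) ((fun x : 'rV[R]_d => x ord0 i) @^-1`
    ([set y : R | a ord0 i <= y] `&` [set y | y <= a ord0 i + s])).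
  apply/seteqP; split=> x /= xbox i; last by have /andP := xbox i I.
  by move=> _; apply/andP; exact: xbox.
apply: closed_bigI => i _; apply: preimage_closed; first by move=> x _; exact: coord_continuous.
by apply: closedI; [exact: closed_ge | exact: closed_le].
Qed.

Lemma borel_box a s : borel (box a s).
Proof. by apply: borel_closed; exact: closed_box. Qed.

Lemma bounded_box a s : Defs.bounded_set (box a s).
Proof.
exists (Num.sqrt (\sum_i (a ord0 i ^+ 2 + (a ord0 i + s) ^+ 2))) => x /= xbox.
rewrite /enorm ler_wsqrtr // ler_sum // => i _.
have /andP[lo hi] := xbox i; have := sqr_ge0 (a ord0 i); have := sqr_ge0 (a ord0 i + s).
by case: (lerP 0 (x ord0 i)) => x0; nra.
Qed.

Lemma bounded_setU A B : Defs.bounded_set A -> Defs.bounded_set B -> Defs.bounded_set (A `|` B).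
Proof.
move=> [r Ar] [r' Br']; exists (Num.max r r') => x [/Ar|/Br'] /= xr.
  by rewrite le_max xr.
by rewrite le_max xr orbT.
Qed.

Lemma cube_box (l : R) : cube l = box (const_mx (- l)) (l *+ 2).
Proof.
by apply/seteqP; split=> x /= xbox i; have := xbox i; rewrite !mxE => /andP[lo hi];
  apply/andP; split; lra.
Qed.

Lemma unit_cube_box : @unit_cube R d = box 0 1.
Proof.
by apply/seteqP; split=> x /= xbox i; have := xbox i; rewrite !mxE => /andP[lo hi];
  apply/andP; split; lra.
Qed.

Lemma unit_cube_sub_cube (l : R) : 1 <= l -> @unit_cube R d `<=` cube l.
Proof. by move=> l1 x xbox i; have /andP[lo hi] := xbox i; apply/andP; split; lra. Qed.

Lemma shift_unit_cube xi v :
  Defs.shift xi v `&` @unit_cube R d = (fun y => y - v) @` (xi `&` box v 1).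
Proof.
apply/seteqP; split=> [_ [[y xiy <-] ybox]|_ [y [xiy ybox] <-]].
  exists y => //; split=> // i; have := ybox i; rewrite !mxE => /andP[lo hi].
  by apply/andP; split; lra.
split; first by exists y.
by move=> i; have := ybox i; rewrite !mxE => /andP[lo hi]; apply/andP; split; lra.
Qed.

Lemma npts_shift_unit_cube_eq0 xi v :
  npts (Defs.shift xi v) (@unit_cube R d) = 0%E <-> npts xi (box v 1) = 0%E.
Proof.
rewrite !npts_eq0 shift_unit_cube.
by split=> [/image_set0_set0|->]; last exact: image_set0.
Qed.

End Geometry.

Section Vacancy.
Variables (R : realType) (d : nat) (dO : measure_display) (Omega : measurableType dO)
  (hat : Omega -> set 'rV[R]_d).
Implicit Types A B : set 'rV[R]_d.

Definition vacant A : set Omega := [set w | npts (hat w) A = 0%E].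

Lemma vacantU A B : vacant (A `|` B) = vacant A `&` vacant B.
Proof.
by apply/seteqP; split=> w; rewrite /vacant /= !npts_eq0 setIUr setU_eq0.
Qed.

Lemma subset_vacant A B : A `<=` B -> vacant B `<=` vacant A.
Proof.
move=> AB w; rewrite /vacant /= !npts_eq0 -!subset0.
by apply: subset_trans; apply: setIS.
Qed.

Hypothesis hpp : point_process hat.

Lemma measurable_vacant A : borel A -> measurable (vacant A).
Proof.
move=> bA; have := hpp.2 A bA measurableT [set 0%E] (emeasurable_set1 _).
by rewrite setTI.
Qed.

Lemma npts_bounded_fin_num w A : Defs.bounded_set A -> npts (hat w) A \is a fin_num.
Proof.
move=> [r Ar]; apply: npts_fin_num; apply: sub_finite_set (hpp.1 w r).
by move=> x [xi xA]; split=> //; exact: Ar.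
Qed.

End Vacancy.

Section Decoupling.
Variables (R : realType) (d : nat) (dO : measure_display) (Omega : measurableType dO)
  (P : probability Omega R) (hat : Omega -> set 'rV[R]_d).

Definition vacancy_submultiplicative (D : R) : Prop :=
  forall A B : set 'rV[R]_d, borel A -> Defs.bounded_set A ->
    borel B -> Defs.bounded_set B -> dist_ge A B D ->
    (P (vacant hat (A `|` B)) <= P (vacant hat A) * P (vacant hat B))%E.

Lemma finite_range_vacancy_submultiplicative :
  finite_range P hat -> exists2 D : R, 0 < D & vacancy_submultiplicative D.
Proof.
move=> [L [L0 indep]]; exists L => // A B bA _ bB _ dAB.
rewrite vacantU (indep A B bA bB dAB) //; apply: sub_sigma_algebra.
  by exists A, 0%E; split.
by exists B, 0%E; split.
Qed.

Lemma Lfun2_indic (E : set Omega) : measurable E -> (\1_E : Omega -> R) \in Lfun P 2%:E.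
Proof.
move=> mE; rewrite inE/=; apply/andP; split; rewrite inE//=.
rewrite /finite_norm unlock poweR_lty//.
have -> : (\int[P]_x `|(EFin \o \1_E) x| `^ 2 = \int[P]_x (\1_E x)%:E)%E.
  apply: eq_integral => x _ /=; rewrite indicE.
  by case: (x \in E); rewrite /= ?normr1 ?powR1 ?normr0 ?powR0.
by rewrite integral_indic // setIT (le_lt_trans (probability_le1 _ _)) ?ltry.
Qed.

(* The vacancy indicator [1{u = 0}] is decreasing in the count, so negative
   association is applied to its opposite. *)
Definition neg_indic0 (u : 'rV[R]_1) : R := - (u ord0 ord0 == 0)%:R.

Lemma incr_on_nonneg_neg_indic0 : incr_on_nonneg neg_indic0.
Proof.
move=> u v /(_ ord0) /andP[u0 uv]; rewrite /neg_indic0.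
have [v0|v0] := eqVneq (v ord0 ord0) 0; last by rewrite oppr0 oppr_le0 ler0n.
have -> : u ord0 ord0 = 0 by lra.
by rewrite eqxx.
Qed.

Hypothesis hpp : point_process hat.

Lemma neg_indic0_npts A : Defs.bounded_set A ->
  (fun w => neg_indic0 (\row_(i < 1) fine (npts (hat w) A))) = \- \1_(vacant hat A).
Proof.
move=> bA; apply/funext => w; rewrite /neg_indic0 mxE /= indicE.
have [wA|wA] := pselect (vacant hat A w); first by rewrite mem_set // wA eqxx.
rewrite memNset //; move: wA (npts_bounded_fin_num hpp w bA); rewrite /vacant /=.
by case: (npts (hat w) A) => //= r /eqP; rewrite eqe => /negbTE->.
Qed.

Lemma neg_assoc_vacancy_submultiplicative :
  neg_assoc P hat -> vacancy_submultiplicative 1.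
Proof.
move=> NA A B bA hA bB hB dAB.
have mA := measurable_vacant hpp bA; have mB := measurable_vacant hpp bB.
have no_pair (i i' : 'I_1) : i <> i' -> False by rewrite (ord1 i) (ord1 i').
have l2A := Lfun2_indic mA; have l2B := Lfun2_indic mB.
have l1 : {subset Lfun P 2%:E <= Lfun P 1} := Lfun_subset12 (fin_num_measure P _ measurableT).
have := NA 1%N 1%N _ _ (fun=> A) (fun=> B)
  incr_on_nonneg_neg_indic0 incr_on_nonneg_neg_indic0
  (fun=> conj bA hA) (fun=> conj bB hB)
  (fun i i' ne => False_ind _ (no_pair i i' ne))
  (fun i i' ne => False_ind _ (no_pair i i' ne))
  (fun _ _ => dist_ge_disjoint ltr01 dAB) => /=.
rewrite (neg_indic0_npts hA) (neg_indic0_npts hB) !rpredN => /(_ l2A l2B).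
have l1A := l1 _ l2A; have l1B := l1 _ l2B; have l1AB := Lfun2_mul_Lfun1 l2A l2B.
rewrite covarianceNN // covarianceE //.
have -> : \1_(vacant hat A) * \1_(vacant hat B)
    = \1_(vacant hat A `&` vacant hat B) :> (Omega -> R).
  by apply/funext => w; rewrite indicI.
by rewrite !expectation_indic ?vacantU ?sube_le0 //; exact: measurableI.
Qed.

End Decoupling.

Lemma probability_setI_full (R : realType) (dO : measure_display) (Omega : measurableType dO)
  (P : probability Omega R) (E F : set Omega) :
  measurable E -> measurable F -> P F = 1%E -> P (E `&` F) = P E.
Proof.
move=> mE mF PF1; rewrite [RHS](measureDI P mE mF) -[LHS]add0e; congr (_ + _)%E.
apply/esym/eqP; rewrite eq_le measure_ge0 andbT.
apply: (@le_trans _ _ (P (~` F))); last by rewrite probability_setC // PF1 subee.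
by apply: le_measure; rewrite ?inE; [exact: measurableD | exact: measurableC | move=> x []].
Qed.

Section Stationarity.
Variables (R : realType) (d : nat) (dO : measure_display) (Omega : measurableType dO)
  (P : probability Omega R) (theta : 'rV[R]_d -> Omega -> Omega)
  (hat : Omega -> set 'rV[R]_d) (c : Omega -> 'rV[R]_d -> 'rV[R]_d -> R).
Hypotheses (hpp : point_process hat) (hA1 : A1 P theta hat) (hA3 : A3 P theta hat c).

Lemma measurable_vacant_box v s : measurable (vacant hat (box v s)).
Proof. by apply: measurable_vacant => //; exact: borel_box. Qed.

Lemma vacancy_box_stationary v : P (vacant hat (box v 1)) = P (vacant hat (box 0 1)).
Proof.
have [Om [mOm POm thetaOm hOm]] := hA3.
rewrite -!(probability_setI_full (measurable_vacant_box _ _) mOm POm).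
rewrite -[in RHS](hA1.1 v); last exact: measurableI (measurable_vacant_box _ _) mOm.
congr (P _); apply/seteqP; split=> w [wv Omw].
  have Omvw : Om (theta v w) by rewrite -(thetaOm v) in Omw.
  split=> //; rewrite /vacant /= (hOm w Omw v).1 -unit_cube_box.
  exact/npts_shift_unit_cube_eq0.
have Omw' : Om w by rewrite -(thetaOm v).
split=> //; move: wv; rewrite /vacant /= (hOm w Omw' v).1 -unit_cube_box.
by move/npts_shift_unit_cube_eq0.
Qed.

Lemma vacancy_unit_cube_lt1 : A2 P hat -> (P (vacant hat (@unit_cube R d)) < 1)%E.
Proof.
move=> hA2; rewrite unit_cube_box lt_neqAle probability_le1 ?andbT; last first.
  exact: measurable_vacant_box.
apply/negP => /eqP vac1; move: hA2; rewrite /A2 unit_cube_box.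
have -> : (\int[P]_w npts (hat w) (box 0 1) = \int[P]_w (cst 0%E) w)%E.
  apply: ae_eq_integral => //; first exact: hpp.2 _ (borel_box _ _).
  exists (~` vacant hat (box 0 1)); split => [|//|w /= nvac vac]; last exact: nvac.
  - exact/measurableC/measurable_vacant_box.
  - by move: (probability_setC P (measurable_vacant_box 0 1)); rewrite vac1 subee.
by rewrite integral0 ltxx.
Qed.

Lemma vacancy_unit_box_uniform_bound : A2 P hat ->
  exists2 q : R, 0 < q < 1 & forall v, (P (vacant hat (box v 1)) <= q%:E)%E.
Proof.
move=> hA2; pose p := fine (P (vacant hat (box 0 1))).
have pE : P (vacant hat (box 0 1)) = p%:E.
  by rewrite fineK // fin_num_measure //; exact: measurable_vacant_box.
have p1 : p < 1 by rewrite -lte_fin -pE -unit_cube_box vacancy_unit_cube_lt1.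
(* [q] must be positive: the decay rate is [- ln q]. *)
exists (Num.max p 2^-1) => [|v]; last by rewrite vacancy_box_stationary pE lee_fin le_max lexx.
by rewrite lt_max gt_max invr_gt0 ltr0n orbT p1 invf_lt1 ?ltr0n ?ltr1n.
Qed.

End Stationarity.

Section Grid.
Variables (R : realType) (d : nat) (dO : measure_display) (Omega : measurableType dO)
  (P : probability Omega R) (hat : Omega -> set 'rV[R]_d).
Hypothesis hpp : point_process hat.
Variables (D q : R).
Hypotheses (D0 : 0 < D) (hD : vacancy_submultiplicative P hat D).
Hypothesis hq : forall v, (P (vacant hat (box v 1)) <= q%:E)%E.
Variables (l : R) (m : nat).

(* Unit cells at spacing D + 1 along each axis, so distinct cells are D apart. *)
Definition grid_cell (k : {ffun 'I_d -> 'I_m}) : set 'rV[R]_d :=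
  box (\row_i (- l + (k i)%:R * (D + 1))) 1.

Definition grid_cells (s : seq {ffun 'I_d -> 'I_m}) : set 'rV[R]_d :=
  \big[setU/set0]_(k <- s) grid_cell k.

Lemma grid_cellsP s x : grid_cells s x -> exists2 k, k \in s & grid_cell k x.
Proof.
elim: s => [|k s ih]; first by rewrite /grid_cells big_nil.
rewrite /grid_cells big_cons => -[kx|/ih[k' k's k'x]]; first by exists k; rewrite ?mem_head.
by exists k'; rewrite // in_cons k's orbT.
Qed.

Lemma borel_grid_cells s : borel (grid_cells s).
Proof.
elim: s => [|k s ih]; rewrite /grid_cells ?big_nil ?big_cons.
  exact: sigma_algebra0.
by apply: borelU => //; exact: borel_box.
Qed.

Lemma bounded_grid_cells s : Defs.bounded_set (grid_cells s).
Proof.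
elim: s => [|k s ih]; rewrite /grid_cells ?big_nil ?big_cons; first by exists 0.
by apply: bounded_setU => //; exact: bounded_box.
Qed.

Lemma dist_ge_grid_cell k k' : k != k' -> dist_ge (grid_cell k) (grid_cell k') D.
Proof.
move=> kk' a b ak bk'; have [i ki] : exists i, k i != k' i.
  by apply/existsP; apply: contraR kk' => /existsPn kk'; apply/eqP/ffunP => i; apply/eqP/negPn.
apply: le_trans (normr_coord_le_enorm _ i); rewrite !mxE.
have := ak i; have := bk' i; rewrite !mxE => /andP[b1 b2] /andP[a1 a2].
have D1 : 0 <= D + 1 by rewrite addr_ge0 ?ltW.
have [kk'i|k'ki] : ((k i)%:R + 1 <= (k' i)%:R :> R) \/ ((k' i)%:R + 1 <= (k i)%:R :> R).
- rewrite !natr1 !ler_nat.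
  by case: ltngtP => [_|_|eq_ki]; [left | right | move: ki; rewrite -val_eqE /= eq_ki eqxx].
- by have := ler_wpM2r D1 kk'i; rewrite ler_normr => prod; apply/orP; right; lra.
- by have := ler_wpM2r D1 k'ki; rewrite ler_normr => prod; apply/orP; left; lra.
Qed.

Lemma vacancy_grid_cells_le s : uniq s -> (P (vacant hat (grid_cells s)) <= (q ^+ size s)%:E)%E.
Proof.
elim: s => [_|k s ih /andP[ks us]].
  by rewrite expr0 probability_le1 //; apply: measurable_vacant => //; exact: borel_grid_cells.
rewrite /grid_cells big_cons -/(grid_cells s) exprS EFinM.
have dist_ks : dist_ge (grid_cell k) (grid_cells s) D.
  move=> a b ak /grid_cellsP[k' k's bk']; apply: dist_ge_grid_cell ak bk'.
  by apply: contraNneq ks => ->.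
apply: le_trans (hD (borel_box _ _) (bounded_box _ _) (borel_grid_cells s)
  (bounded_grid_cells s) dist_ks) _.
by apply: lee_pmul => //; exact: ih.
Qed.

Lemma grid_cells_sub_cube : m%:R * (D + 1) <= l *+ 2 ->
  grid_cells (enum {ffun 'I_d -> 'I_m}) `<=` cube l.
Proof.
move=> mD x /grid_cellsP[k _ kx] i; have := kx i; rewrite !mxE => /andP[lo hi].
have D1 : 0 <= D + 1 by rewrite addr_ge0 ?ltW.
have ki : (k i)%:R + 1 <= m%:R :> R by rewrite natr1 ler_nat ltn_ord.
have := ler_wpM2r D1 ki; have := mulr_ge0 (ler0n R (k i)) D1.
by move: D0 mD; rewrite mulr2n => *; apply/andP; split; lra.
Qed.

Lemma vacancy_cube_le_grid : m%:R * (D + 1) <= l *+ 2 ->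
  (P (vacant hat (cube l)) <= (q ^+ (m ^ d))%:E)%E.
Proof.
move=> mD; have -> : (m ^ d)%N = size (enum {ffun 'I_d -> 'I_m}).
  by rewrite -cardE card_ffun !card_ord.
apply: le_trans (vacancy_grid_cells_le (enum_uniq _)).
apply: le_measure; rewrite ?inE; last exact/subset_vacant/grid_cells_sub_cube.
- by apply: measurable_vacant => //; rewrite cube_box; exact: borel_box.
- by apply: measurable_vacant => //; exact: borel_grid_cells.
Qed.

End Grid.

Section ExponentialBounds.
Variable R : realType.

Lemma exprn_le_expR_ln (q x : R) (n : nat) :
  0 < q <= 1 -> x <= n%:R -> q ^+ n <= expR (ln q * x).
Proof.
move=> /andP[q0 q1] xn.
rewrite -[q in q ^+ n]lnK ?posrE // -expRM_natr ler_expR.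
by have := ln_le0 q1; nra.
Qed.

Lemma expR_le_poly (d : nat) (c0 alpha : R) : (0 < d)%N -> 0 < c0 -> 0 < alpha ->
  exists kappa : R, 0 < kappa /\ forall l : R, 1 <= l ->
    expR (- c0 * l ^+ d) <= kappa * l `^ (- alpha).
Proof.
move=> d0 c00 a0.
have [n aN] : exists n : nat, alpha <= n.+1%:R.
  by exists (Num.truncn alpha); have /andP[_ /ltW] := truncn_itv (ltW a0).
set N := n.+1.
have fact0 : 0 < N`!%:R :> R by rewrite ltr0n fact_gt0.
exists (N`!%:R / c0 ^+ N); split => [|l l1]; first by rewrite divr_gt0 ?exprn_gt0.
have l0 : 0 < l := lt_le_trans ltr01 l1.
have ld : l <= l ^+ d.
  by case: d d0 => // d' _; rewrite exprS ler_peMr ?(ltW l0) ?exprn_ege1.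
have exp_ge : (c0 * l) ^+ N / N`!%:R <= expR (c0 * l).
  apply: le_trans (expR_ge1Dxn n (ltW (mulr_gt0 c00 l0))); lra.
have powN : l `^ alpha <= l ^+ N by rewrite -powR_mulrn ?(ltW l0) // ler_powR.
apply: (@le_trans _ _ (expR (- (c0 * l)))).
  by rewrite ler_expR mulNr lerN2 ler_wpM2l ?(ltW c00).
rewrite expRN powRN (@le_trans _ _ (((c0 * l) ^+ N / N`!%:R)^-1)) //.
  by rewrite lef_pV2 ?posrE ?expR_gt0 ?divr_gt0 ?exprn_gt0 ?mulr_gt0.
rewrite invf_div exprMn invfM mulrA ler_wpM2l ?divr_ge0 ?exprn_ge0 ?(ltW c00) //.
by rewrite lef_pV2 ?posrE ?powR_gt0 ?exprn_gt0.
Qed.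

End ExponentialBounds.

Section Decay.
Variables (R : realType) (d : nat) (dO : measure_display) (Omega : measurableType dO)
  (P : probability Omega R) (hat : Omega -> set 'rV[R]_d).
Hypothesis hpp : point_process hat.
Variables (D q : R).
Hypotheses (D0 : 0 < D) (hD : vacancy_submultiplicative P hat D).
Hypotheses (q01 : 0 < q < 1) (hq : forall v, (P (vacant hat (box v 1)) <= q%:E)%E).

Lemma vacancy_cube_le_pow (l : R) : 1 <= l ->
  exists2 k : nat, l / (D + 1) <= k%:R & (P (vacant hat (cube l)) <= (q ^+ (k ^ d))%:E)%E.
Proof.
move=> l1; have M0 : 0 < D + 1 by rewrite addr_gt0.
have [lM|Ml] := ltP l (D + 1).
  exists 1%N; first by rewrite ler_pdivrMr // mul1r ltW.
  rewrite exp1n expr1; apply: le_trans (hq 0); apply: le_measure; rewrite ?inE.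
  - by apply: measurable_vacant => //; rewrite cube_box; exact: borel_box.
  - by apply: measurable_vacant => //; exact: borel_box.
  - by apply: subset_vacant; rewrite -unit_cube_box; exact: unit_cube_sub_cube.
have x0 : 0 <= l *+ 2 / (D + 1) by rewrite divr_ge0 ?ltW // mulr2n; lra.
have /andP[lo hi] := truncn_itv x0.
exists (Num.truncn (l *+ 2 / (D + 1))).
  have : 1 <= l / (D + 1) by rewrite ler_pdivlMr // mul1r.
  by move: hi; rewrite -natr1 mulr2n mulrDl; lra.
by apply: (vacancy_cube_le_grid hpp D0 hD hq); rewrite -ler_pdivlMr.
Qed.

Lemma vacancy_cube_exp_decay : exists c0 : R, 0 < c0 /\ forall l : R, 1 <= l ->
  (P (vacant hat (cube l)) <= (expR (- c0 * l ^+ d))%:E)%E.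
Proof.
have /andP[q0 q1] := q01; have M0 : 0 < D + 1 by rewrite addr_gt0.
exists (- ln q / (D + 1) ^+ d); split.
  by rewrite divr_gt0 ?exprn_gt0 // oppr_gt0 ln_lt0 // q0.
move=> l l1; have [k lk vac] := vacancy_cube_le_pow l1.
apply: le_trans vac _; rewrite lee_fin.
have -> : - (- ln q / (D + 1) ^+ d) * l ^+ d = ln q * (l / (D + 1)) ^+ d.
  by rewrite expr_div_n; field; rewrite expf_neq0 // gt_eqF.
apply: exprn_le_expR_ln; first by rewrite q0 ltW.
rewrite natrX lerXn2r // !nnegrE ?ler0n //.
by apply: divr_ge0; [exact: le_trans ler01 l1 | exact: ltW].
Qed.

End Decay.

Unset Implicit Arguments.
Set Strict Implicit.

Theorem proposition4p6 (R : realType) (d : nat) (hd : (0 < d)%N)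
  (dO : measure_display) (Omega : measurableType dO) (P : probability Omega R)
  (theta : 'rV[R]_d -> Omega -> Omega) (hat : Omega -> set 'rV[R]_d)
  (c : Omega -> 'rV[R]_d -> 'rV[R]_d -> R) :
  measurable_action theta ->
  point_process hat ->
  conductances hat c ->
  A1 P theta hat -> A2 P hat -> A3 P theta hat c ->
  finite_range P hat \/ neg_assoc P hat ->
  (exists c0 : R, 0 < c0 /\
     forall l : R, 1 <= l ->
       (P [set w | npts (hat w) (@cube R d l) = 0%E] <= (expR (- c0 * l ^+ d))%:E)%E)
  /\
  (forall alpha : R, 0 < alpha -> exists kappa : R, 0 < kappa /\
     forall l : R, 1 <= l ->
       (P [set w | npts (hat w) (@cube R d l) = 0%E] <= (kappa * l `^ (- alpha))%:E)%E).
Proof.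
move=> _ hpp _ hA1 hA2 hA3 dependence.
have [D D0 hD] : exists2 D : R, 0 < D & vacancy_submultiplicative P hat D.
  case: dependence => [|NA]; first exact: finite_range_vacancy_submultiplicative.
  by exists 1 => //; exact: neg_assoc_vacancy_submultiplicative.
have [q q01 hq] := vacancy_unit_box_uniform_bound hpp hA1 hA3 hA2.
have [c0 [c00 decay]] := vacancy_cube_exp_decay hpp D0 hD q01 hq.
split; first by exists c0.
move=> alpha alpha0; have [kappa [kappa0 poly]] := expR_le_poly hd c00 alpha0.
exists kappa; split => // l l1; apply: le_trans (decay l l1) _.
by rewrite lee_fin poly.
Qed.
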